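(* Let $A\in M_n(\mathbb{C})$ be skew-symmetric ($A^\top=-A$). There is an $n\times n$ matrix $C=C(A)$, each of whose entries is a polynomial with real coefficients in the entries of $A$, such that the first column of $CAC^\top$ has all entries equal to zero except possibly the entry in the second row, and such that $\det(C(A))$, viewed as a polynomial in the entries of $A$, is not the zero polynomial. *)

From mathcomp Require Import all_boot all_algebra.
From mathcomp Require Import Rstruct.
From Stdlib Require Import Reals.
From mathcomp.real_closed Require Import complex.
From mathcomp Require Import mpoly.

Set Implicit Arguments.
Unset Strict Implicit.
Unset Printing Implicit Defensive.

Import GRing.Theory.
Local Open Scope ring_scope.

Definition Cplx : fieldType := complex R.

(* Real polynomials in the n^2 entries of an n x n matrix: the entry (i,j)
   is the variable 'X_(mxvec_index i j) of {mpoly R[n * n]}. *)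
Definition polymx (n : nat) := 'M[{mpoly R[n * n]}]_n.

Definition mx_eval (n : nat) (S : comRingType) (f : R -> S)
    (C : polymx n) (A : 'M[S]_n) : 'M[S]_n :=
  map_mx (mmap f (fun v : 'I_(n * n) => mxvec A 0 v)) C.

Definition evalC (n : nat) (C : polymx n) (A : 'M[Cplx]_n) : 'M[Cplx]_n :=
  mx_eval (fun x : R => (x%:C)%C) C A.

Definition generic_skew (n : nat) : 'M[{mpoly R[n * n]}]_n :=
  \matrix_(i < n, j < n)
    if ltn i j then 'X_(mxvec_index i j)
    else if ltn j i then - 'X_(mxvec_index j i)
    else 0.

(* det(C(A)) viewed as a polynomial in the (independent) entries of the
   skew-symmetric matrix A. *)
Definition det_poly_skew (n : nat) (C : polymx n) : {mpoly R[n * n]} :=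
  \det (mx_eval (fun x : R => x%:MP) C (generic_skew n)).

From mathcomp Require Import all_boot all_algebra.
From mathcomp Require Import Rstruct.
From Stdlib Require Import Reals.
From mathcomp.real_closed Require Import complex.
From mathcomp Require Import mpoly.

Set Implicit Arguments.
Unset Strict Implicit.
Unset Printing Implicit Defensive.

Import GRing.Theory.
Local Open Scope ring_scope.

(* For n >= 2 let C(A) have rows e_0, e_1 and a_i0 e_1 + a_01 e_i (i >= 2).
   As the first row of C is e_0, the first column of C A C^T is that of C A,
   whose i-th entry is a_00 = 0 for i = 0 and a_i0 a_10 + a_01 a_i0 = 0 for
   i >= 2. C is lower triangular with diagonal 1, 1, a_01, ..., a_01, so
   det C = a_01^(n-2), a nonzero monomial in the entries of the generic
   skew-symmetric matrix. For n < 2 the identity matrix does the job. *)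

Lemma skew_mx_diag (R : numDomainType) n (A : 'M[R]_n) i :
  A^T = - A -> A i i = 0.
Proof.
move=> /matrixP /(_ i i); rewrite !mxE => /eqP.
by rewrite -addr_eq0 -mulr2n Num.Theory.mulrn_eq0 => /eqP.
Qed.

Lemma mpolyX_neq0 n (R : nzRingType) (m : 'X_{1..n}) :
  'X_[m] != 0 :> {mpoly R[n]}.
Proof.
apply: contra_neq (@oner_neq0 R) => Xm0.
by have := mcoeffX R m m; rewrite Xm0 mcoeff0 eqxx.
Qed.

Lemma sumr_mulrn_pred1 (V : nmodType) (I : finType) (F : I -> V) j :
  \sum_i F i *+ (i == j) = F j.
Proof. by rewrite (eq_bigr _ (fun i _ => mulrb _ _)) -big_mkcond big_pred1_eq. Qed.

Section SkewReducer.
Variables (S : comNzRingType) (m : nat).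
Implicit Types A : 'M[S]_m.+2.
Local Notation o1 := (inord 1 : 'I_m.+2).

Lemma val_inord1 : nat_of_ord o1 = 1%nat. Proof. by rewrite inordK. Qed.

Lemma inord1_eqF (i : 'I_m.+2) : (2 <= i)%nat -> (i == o1) = false.
Proof. by move=> le2i; rewrite -val_eqE /= val_inord1 gtn_eqF. Qed.

Definition skew_reducer A : 'M[S]_m.+2 :=
  \matrix_(i, j) (if (i < 2)%nat then (i == j)%:R
                  else A i ord0 *+ (j == o1) + A ord0 o1 *+ (j == i) : S).

Lemma skew_reducer_row0 A j : skew_reducer A ord0 j = (j == ord0)%:R.
Proof. by rewrite mxE eq_sym. Qed.

Lemma skew_reducer_trig A : is_trig_mx (skew_reducer A).
Proof.
apply/is_trig_mxP => i j lt_ij; rewrite mxE.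
have [-> ->] : (i == j) = false /\ (j == i) = false.
  by rewrite -!val_eqE /= ltn_eqF // gtn_eqF.
case: ltnP => [//|le2i].
by rewrite inord1_eqF ?addr0 // (leq_trans le2i (ltnW lt_ij)).
Qed.

Lemma det_skew_reducer A : \det (skew_reducer A) = A ord0 o1 ^+ m.
Proof.
rewrite det_trig ?skew_reducer_trig // !big_ord_recl !mxE !eqxx !mul1r.
rewrite (eq_bigr (fun=> A ord0 o1)) ?prodr_const ?card_ord // => i _.
by rewrite mxE /= eqxx inord1_eqF // add0r.
Qed.

Lemma skew_reducer_col0 A (i : 'I_m.+2) :
  A^T = - A -> A ord0 ord0 = 0 -> i != o1 ->
  (skew_reducer A *m A *m (skew_reducer A)^T) i ord0 = 0.
Proof.
move=> /matrixP skewA A00 ni1.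
rewrite mxE (eq_bigr (fun k => (skew_reducer A *m A) i k *+ (k == ord0))).
  rewrite (sumr_mulrn_pred1 (fun k => (skew_reducer A *m A) i k)) mxE.
  case: (ltnP i 2) => [lt_i2|le2i].
    have -> : i = ord0.
      apply/val_inj; move: ni1; rewrite -val_eqE /= val_inord1.
      by case: (val i) lt_i2 => [|[]].
    under eq_bigr do rewrite skew_reducer_row0 mulr_natl.
    by rewrite sumr_mulrn_pred1.
  under eq_bigr do rewrite mxE ltnNge le2i /= mulrDl !mulrnAl.
  rewrite big_split !sumr_mulrn_pred1 /=.
  have := skewA ord0 o1; rewrite !mxE => ->.
  by rewrite mulrN [A i _ * _]mulrC addNr.
by move=> k _; rewrite [_^T _ _]mxE skew_reducer_row0 mulr_natr.
Qed.

End SkewReducer.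

Lemma map_skew_reducer (S T : comNzRingType) (g : {rmorphism S -> T}) m
    (A : 'M[S]_m.+2) :
  map_mx g (skew_reducer A) = skew_reducer (map_mx g A).
Proof.
by apply/matrixP => i j; rewrite !mxE (fun_if g) rmorph_nat rmorphD !rmorphMn.
Qed.

Definition generic_mx n : 'M[{mpoly R[n * n]}]_n :=
  \matrix_(i, j) 'X_(mxvec_index i j).

Section Evaluation.
Variables (S : comNzRingType) (f : {rmorphism R -> S}).

Lemma mx_eval1 n (A : 'M[S]_n) : mx_eval f 1%:M A = 1%:M.
Proof. exact: map_mx1. Qed.

Lemma mx_eval_generic_mx n (A : 'M[S]_n) : mx_eval f (generic_mx n) A = A.
Proof. by apply/matrixP => i j; rewrite !mxE mmapX mmap1U mxvecE. Qed.

Lemma mx_eval_skew_reducer m (A : 'M[S]_m.+2) :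
  mx_eval f (skew_reducer (generic_mx m.+2)) A = skew_reducer A.
Proof.
by rewrite /mx_eval map_skew_reducer -/(mx_eval f _ A) mx_eval_generic_mx.
Qed.

End Evaluation.

Lemma det_poly_skew1 n : det_poly_skew (1%:M : polymx n) = 1.
Proof. by rewrite /det_poly_skew (mx_eval1 (@mpolyC _ R)) det1. Qed.

Lemma det_poly_skew_reducer m :
  det_poly_skew (skew_reducer (generic_mx m.+2)) =
  'X_(mxvec_index ord0 (inord 1)) ^+ m.
Proof.
rewrite /det_poly_skew (mx_eval_skew_reducer (@mpolyC _ R)).
by rewrite det_skew_reducer mxE /ltn /= val_inord1.
Qed.

Theorem lemmaI4 (n : nat) :
  exists C : polymx n,
    (forall A : 'M[Cplx]_n, A^T = - A ->
       forall i j : 'I_n, nat_of_ord j = 0%N -> nat_of_ord i <> 1%N ->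
         (evalC C A *m A *m (evalC C A)^T) i j = 0)
    /\ det_poly_skew C != 0.
Proof.
case: n => [|[|m]].
- by exists 1%:M; split=> [A _ []|]; rewrite // det_poly_skew1 oner_neq0.
- exists 1%:M; split=> [A skewA i j _ _|]; last by rewrite det_poly_skew1 oner_neq0.
  rewrite /evalC (mx_eval1 (real_complex R)) trmx1 mul1mx mulmx1.
  by rewrite !ord1 (skew_mx_diag _ skewA).
exists (skew_reducer (generic_mx m.+2)); split.
  move=> A skewA i j j0 i1; rewrite /evalC (mx_eval_skew_reducer (real_complex R)).
  have -> : j = ord0 by apply/val_inj.
  apply: skew_reducer_col0 skewA (skew_mx_diag _ skewA) _.
  by apply: contra_notN i1 => /eqP ->; rewrite val_inord1.
by rewrite det_poly_skew_reducer mpolyXn mpolyX_neq0.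
Qed.
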